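(* Suppose all declared valuation functions are symmetric submodular and the item cost functions $c_j:2^N\to\mathbb{R}_{\ge0}$ are arbitrary. Index the players by the iteration in which IACSM removes them from the active set, so that player $i$ is removed (and receives her final bundle $A_i$) in iteration $i$. Then $A_i\subseteq A_{i+1}$ for every $i\in\{1,\dots,n-1\}$.
   Context: Players $N=\{1,\dots,n\}$, items $M=\{1,\dots,m\}$, declared valuations $b_i:2^M\to\mathbb{R}_{\ge0}$ (non-decreasing), item cost functions $c_j:2^N\to\mathbb{R}_{\ge0}$. Symmetric: $f(S)=f(T)$ whenever $|S|=|T|$; submodular: $f(S\cup\{x\})-f(S)\ge f(T\cup\{x\})-f(T)$ for $S\subseteq T$, $x\notin T$. Mechanism IACSM (input: declared valuations $b$): maintain active set $X=N$, sets $T_j=N$ and cost shares $\chi_j=c_j(N)/n$ for all items $j$. While $X\neq\emptyset$: (1) every $i\in X$ computes $A_i\in\arg\max_{S\subseteq M}\{b_i(S)-\sum_{j\in S}\chi_j\}$, choosing among maximizers one of maximum cardinality $k$, and among those the $k$ items with smallest current $\chi_j$ (item ties by index); (2) choose $i^*\in X$ with $|A_{i^*}|$ minimum (ties by smallest index); (3) assign $A_{i^*}$ to $i^*$ permanently and remove $i^*$ from $X$; (4) for every item $j\notin A_{i^*}$ set $T_j:=T_j\setminus\{i^*\}$ and, if $T_j\ne\emptyset$, set $\chi_j:=\max\{\chi_j,c_j(T_j)/|T_j|\}$. Output the assigned bundles and payments $p_i=\sum_{j\in A_i}\chi_j$ with final cost shares. (If several players are removed ''simultaneously'' at the end, treat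 them as removed one per iteration in a consistent order.) *)

From HB Require Import structures.
From mathcomp Require Import all_boot all_order all_algebra.
Set Implicit Arguments. Unset Strict Implicit. Unset Printing Implicit Defensive.
Import Order.TTheory GRing.Theory Num.Theory.
Local Open Scope ring_scope.

Definition symmetric_setfun (T : finType) (R : realFieldType) (f : {set T} -> R) :=
  forall S U : {set T}, #|S| = #|U| -> f S = f U.

Definition submodular (T : finType) (R : realFieldType) (f : {set T} -> R) :=
  forall (S U : {set T}) (x : T), S \subset U -> x \notin U ->
    f (x |: U) - f U <= f (x |: S) - f S.

Definition nondecreasing_setfun (T : finType) (R : realFieldType) (f : {set T} -> R) :=
  forall S U : {set T}, S \subset U -> f S <= f U.

Definition nonneg_setfun (T : finType) (R : realFieldType) (f : {set T} -> R) :=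
  forall S : {set T}, 0 <= f S.

Section IACSM.
Variables (R : realFieldType) (n m : nat).
Variable b : 'I_n -> {set 'I_m} -> R.
Variable c : 'I_m -> {set 'I_n} -> R.

(* State of the mechanism: active set X, sets T_j, cost shares chi_j *)
Record state := State {
  st_act : {set 'I_n};
  st_T : 'I_m -> {set 'I_n};
  st_chi : 'I_m -> R }.

Definition utility (chi : 'I_m -> R) (i : 'I_n) (S : {set 'I_m}) : R :=
  b i S - \sum_(j in S) chi j.

Definition is_maximizer (chi : 'I_m -> R) (i : 'I_n) (S : {set 'I_m}) : bool :=
  [forall S' : {set 'I_m}, utility chi i S' <= utility chi i S].

Definition demand_card (chi : 'I_m -> R) (i : 'I_n) : nat :=
  \max_(S : {set 'I_m} | is_maximizer chi i S) #|S|.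

Definition preceding (chi : 'I_m -> R) (j : 'I_m) : {set 'I_m} :=
  [set j' | (chi j' < chi j) || ((chi j' == chi j) && (j' < j)%N)].

Definition smallest_items (chi : 'I_m -> R) (k : nat) : {set 'I_m} :=
  [set j | (#|preceding chi j| < k)%N].

Definition demand (chi : 'I_m -> R) (i : 'I_n) : {set 'I_m} :=
  smallest_items chi (demand_card chi i).

Definition selected (s : state) : option 'I_n :=
  [pick i in st_act s | [forall i' in st_act s,
     (#|demand (st_chi s) i| < #|demand (st_chi s) i'|)%N ||
     ((#|demand (st_chi s) i| == #|demand (st_chi s) i'|) && (i <= i')%N)]].

Definition step (s : state) : option ('I_n * {set 'I_m} * state) :=
  match selected s with
  | None => None
  | Some istar =>
      let A := demand (st_chi s) istar in
      let T' := fun j => if j \in A then st_T s j else st_T s j :\ istar in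
      let chi' := fun j =>
        if (j \notin A) && (T' j != set0)
        then Num.max (st_chi s j) (c j (T' j) / #|T' j|%:R)
        else st_chi s j in
      Some (istar, A, State (st_act s :\ istar) T' chi')
  end.

Fixpoint run (fuel : nat) (s : state) : seq ('I_n * {set 'I_m}) :=
  match fuel with
  | 0 => [::]
  | k.+1 => match step s with
            | None => [::]
            | Some (i, A, s') => (i, A) :: run k s'
            end
  end.

Definition init_state : state :=
  State [set: 'I_n] (fun _ => [set: 'I_n]) (fun j => c j [set: 'I_n] / n%:R).

Definition iacsm_bundles : seq {set 'I_m} := map snd (run n init_state).

Definition iacsm_outcome : seq ('I_n * {set 'I_m}) := run n init_state.

End IACSM.

(* Symmetry and submodularity make a player's marginal value for an item depend
   only on the size of the bundle it is added to, and decrease with that size.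
   When a player with bundle A is removed, every remaining player demanded at
   least |A| items, A consists of the |A| cheapest items, and only prices
   outside A rise.  So a remaining player still demands at least |A| items:
   otherwise some j in A is missing from her largest demanded bundle S', yet
   the marginal value of j over S' is at least that of an item t, priced no
   lower than j, in her larger previously demanded bundle, and j |: S' would be
   demanded too.  As A also stays among the |A| cheapest items, it is contained
   in the next selected bundle. *)
From HB Require Import structures.
From mathcomp Require Import all_boot all_order all_algebra.
From mathcomp Require Import lra zify.
Set Implicit Arguments. Unset Strict Implicit. Unset Printing Implicit Defensive.
Import Order.TTheory GRing.Theory Num.Theory.
Local Open Scope ring_scope.

Section ItemOrder.
Variables (R : realFieldType) (m : nat) (chi : 'I_m -> R).

Definition item_lt (a j : 'I_m) := (chi a < chi j) || ((chi a == chi j) && (a < j)%N).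

Lemma item_lt_irr a : ~~ item_lt a a.
Proof. by rewrite /item_lt ltxx eqxx ltnn. Qed.

Lemma item_lt_trans a b c : item_lt a b -> item_lt b c -> item_lt a c.
Proof.
move=> /orP[h1|/andP[/eqP e1 h1]] /orP[h2|/andP[/eqP e2 h2]]; rewrite /item_lt.
- by rewrite (lt_trans h1 h2).
- by rewrite -e2 h1.
- by rewrite e1 h2.
- by rewrite e1 e2 eqxx (ltn_trans h1 h2) orbT.
Qed.

Lemma item_lt_total a b : a != b -> item_lt a b || item_lt b a.
Proof.
move=> nab; rewrite /item_lt; case: (ltgtP (chi a) (chi b)) => //= _.
by rewrite -neq_ltn.
Qed.

Lemma card_preceding_lt a b :
  item_lt a b -> (#|preceding chi a| < #|preceding chi b|)%N.
Proof.
move=> hab; apply: proper_card; apply/properP; split.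
  apply/subsetP => x; rewrite !inE => hx; exact: item_lt_trans hx hab.
by exists a; rewrite !inE ?hab //; exact: item_lt_irr.
Qed.

Lemma card_preceding_ltm j : (#|preceding chi j| < m)%N.
Proof.
rewrite -[m in (_ < m)%N]card_ord -cardsT; apply: proper_card; apply/properP.
by split; [exact: subsetT | exists j; rewrite ?inE ?item_lt_irr].
Qed.

Definition item_rank (j : 'I_m) : 'I_m := Ordinal (card_preceding_ltm j).

Lemma item_rank_inj : injective item_rank.
Proof.
move=> a b /(congr1 val) /= e; apply/eqP/negPn/negP => nab.
by case/orP: (item_lt_total nab) => /card_preceding_lt; rewrite e ltnn.
Qed.

Lemma card_smallest_items k : (k <= m)%N -> #|smallest_items chi k| = k.
Proof.
move=> km.
have -> : smallest_items chi k = item_rank @^-1: [set i : 'I_m | (i < k)%N].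
  by apply/setP => j; rewrite !inE.
rewrite card_preimset; last exact: item_rank_inj.
have -> : [set i : 'I_m | (i < k)%N] = [set widen_ord km i | i in 'I_k].
  apply/setP => i; rewrite inE; apply/idP/imsetP => [lt_ik|[i' _ ->]].
    by exists (Ordinal lt_ik); last exact: val_inj.
  by rewrite /= ltn_ord.
by rewrite card_imset ?card_ord // => x y /(congr1 val) /= /val_inj.
Qed.

Lemma smallest_items_mono k k' :
  (k <= k')%N -> smallest_items chi k \subset smallest_items chi k'.
Proof. by move=> kk'; apply/subsetP => j; rewrite !inE => /leq_trans; apply. Qed.

Lemma exists_price_ge (T : {set 'I_m}) k j :
  (k <= #|T|)%N -> j \in smallest_items chi k -> exists2 t, t \in T & chi j <= chi t.
Proof.
move=> kT; rewrite inE => jk.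
have [/existsP[t /andP[]]|] := boolP [exists t in T, chi j <= chi t]; first by exists t.
rewrite negb_exists => /forallP no_t.
have : T \subset preceding chi j.
  by apply/subsetP => t tT; rewrite inE /item_lt; move: (no_t t); rewrite tT -ltNge => ->.
by move/subset_leq_card/leq_ltn_trans/(_ jk)/leq_trans/(_ kT); rewrite ltnn.
Qed.

End ItemOrder.

Definition raised_outside (R : realFieldType) (m : nat)
    (A : {set 'I_m}) (chi chi' : 'I_m -> R) :=
  (forall j, j \in A -> chi' j = chi j) /\ (forall j, chi j <= chi' j).

Lemma smallest_items_raised (R : realFieldType) (m : nat) (chi chi' : 'I_m -> R) k :
  raised_outside (smallest_items chi k) chi chi' ->
  smallest_items chi k \subset smallest_items chi' k.
Proof.
move=> [fixed raised]; apply/subsetP => j jk.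
have : preceding chi' j \subset preceding chi j.
  apply/subsetP => x; rewrite !inE /item_lt (fixed j jk).
  case/orP=> [/(le_lt_trans (raised x))->//|/andP[/eqP chi'x xj]].
  by move: (raised x); rewrite chi'x le_eqVlt => /orP[/eqP->|->]; rewrite ?eqxx ?xj ?orbT.
by move: jk; rewrite !inE => jk /subset_leq_card/leq_ltn_trans; apply.
Qed.

Lemma symmetric_submodular_marginal_le (T : finType) (R : realFieldType)
    (f : {set T} -> R) :
  symmetric_setfun f -> submodular f ->
  forall (X Y : {set T}) x y, x \notin X -> y \notin Y -> (#|X| <= #|Y|)%N ->
  f (y |: Y) - f Y <= f (x |: X) - f X.
Proof.
move=> sym sub X Y x y xX yY XY.
set X0 := [set z in take #|X| (enum Y)].
have cardX0 : #|X0| = #|X|.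
  rewrite cardsE (card_uniqP _) ?take_uniq ?enum_uniq //.
  by rewrite size_takel // -cardE.
have X0Y : X0 \subset Y.
  by apply/subsetP => z; rewrite inE => /mem_take; rewrite mem_enum.
have yX0 : y \notin X0 by apply: contra yY; apply/subsetP.
rewrite -(sym X0 X) // -(sym (y |: X0) (x |: X)) ?cardsU1 ?xX ?yX0 ?cardX0 //.
exact: sub.
Qed.

Section Demand.
Variables (R : realFieldType) (n m : nat) (b : 'I_n -> {set 'I_m} -> R).
Implicit Types (chi : 'I_m -> R) (p : 'I_n) (S T : {set 'I_m}).

Lemma demand_card_le_m chi p : (demand_card b chi p <= m)%N.
Proof. by apply/bigmax_leqP => S _; rewrite -[m in (_ <= m)%N]card_ord max_card. Qed.

Lemma card_demand chi p : #|demand b chi p| = demand_card b chi p.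
Proof. by rewrite card_smallest_items // demand_card_le_m. Qed.

Lemma card_maximizer_le chi p S :
  is_maximizer b chi p S -> (#|S| <= demand_card b chi p)%N.
Proof. exact: (@leq_bigmax_cond _ _ (fun S : {set 'I_m} => #|S|)). Qed.

Lemma exists_max_card_maximizer chi p :
  exists2 S, is_maximizer b chi p S & #|S| = demand_card b chi p.
Proof.
have [S0 _ S0max] := arg_maxP (utility b chi p) (P := predT) (i0 := set0) isT.
have S0maxb : is_maximizer b chi p S0 by apply/forallP => S; exact: S0max.
rewrite /demand_card (bigop.bigmax_eq_arg _ S0maxb).
by case: arg_maxnP => // S; exists S.
Qed.

Lemma maximizer_price_le chi p T t :
  is_maximizer b chi p T -> t \in T -> chi t <= b p T - b p (T :\ t).
Proof.
move=> /forallP/(_ (T :\ t)) + tT.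
by rewrite /utility (big_setD1 _ tT) /=; lra.
Qed.

Lemma maximizer_setU1 chi p S j :
  is_maximizer b chi p S -> j \notin S -> chi j <= b p (j |: S) - b p S ->
  is_maximizer b chi p (j |: S).
Proof.
move=> /forallP Smax jS jgain; apply/forallP => S'.
by move: (Smax S'); rewrite /utility (big_setU1 _ jS) /=; lra.
Qed.

Lemma demand_card_raised p chi chi' k :
  symmetric_setfun (b p) -> submodular (b p) ->
  (k <= demand_card b chi p)%N ->
  raised_outside (smallest_items chi k) chi chi' ->
  (k <= demand_card b chi' p)%N.
Proof.
move=> sym sub kdem [fixed raised]; rewrite leqNgt; apply/negP => dem'k.
have [S' S'max cardS'] := exists_max_card_maximizer chi' p.
have [T Tmax cardT] := exists_max_card_maximizer chi p.
have : ~~ (smallest_items chi k \subset S').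
  have km : (k <= m)%N := leq_trans kdem (demand_card_le_m _ _).
  by apply/negP => /subset_leq_card; rewrite card_smallest_items // cardS' leqNgt dem'k.
case/subsetPn => j jk jS'.
have kT : (k <= #|T|)%N by rewrite cardT.
have [t tT chi_jt] := exists_price_ge kT jk.
have S'T : (#|S'| <= #|T :\ t|)%N.
  move: (cardsD1 t T); rewrite tT add1n => cardT1.
  by rewrite -ltnS -cardT1 cardS' (leq_trans dem'k kT).
have gain_j : chi' j <= b p (j |: S') - b p S'.
  rewrite fixed //; apply: (le_trans chi_jt); apply: (le_trans (maximizer_price_le Tmax tT)).
  by rewrite -{1}(setD1K tT); apply: symmetric_submodular_marginal_le; rewrite ?setD11.
move: (card_maximizer_le (maximizer_setU1 S'max jS' gain_j)).
by rewrite cardsU1 jS' cardS' ltnn.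
Qed.

End Demand.

Lemma lex_leq_of_encoded (N x y u v : nat) : (u < N)%N -> (v < N)%N ->
  (x * N + u <= y * N + v)%N -> (x < y)%N || (x == y) && (u <= v)%N.
Proof.
move=> uN vN le; case: ltngtP => //= xy; last by move: le; rewrite xy leq_add2l.
have : (y * N + v < x * N + u)%N by nia.
by rewrite ltnNge le.
Qed.

Section Iteration.
Variables (R : realFieldType) (n m : nat) (b : 'I_n -> {set 'I_m} -> R)
  (c : 'I_m -> {set 'I_n} -> R).
Implicit Types (s : state R n m) (i : 'I_n) (A : {set 'I_m}).

Lemma step_spec s i A s' : step b c s = Some (i, A, s') ->
  [/\ i \in st_act s, A = demand b (st_chi s) i,
      forall i', i' \in st_act s -> (#|A| <= #|demand b (st_chi s) i'|)%N,
      st_act s' = st_act s :\ i &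
      raised_outside A (st_chi s) (st_chi s')].
Proof.
rewrite /step /selected; case: pickP => [i0 /andP[act_i0 /forallP min_i0]|//].
case=> <- <- <- /=; split=> //; last split.
- move=> i' act_i'; move: (min_i0 i'); rewrite act_i' /=.
  by case/orP=> [/ltnW|/andP[/eqP-> _]].
- by move=> j ->.
- by move=> j; case: ifP => _; rewrite ?le_max lexx.
Qed.

Lemma step_some_nonempty s : st_act s != set0 -> exists i A s', step b c s = Some (i, A, s').
Proof.
case/set0Pn => i0 act_i0; rewrite /step /selected.
case: pickP => [i _|none_selected]; first by eauto.
pose rank i := (#|demand b (st_chi s) i| * n + i)%N.
have [k act_k k_min] := arg_minnP rank act_i0.
case/negP: (none_selected k); rewrite [_ \in _]act_k; apply/forall_inP => i' act_i'.
exact: lex_leq_of_encoded (ltn_ord k) (ltn_ord i') (k_min i' act_i').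
Qed.

Lemma step_bundle_subset s i A s' i' A' s'' :
  (forall p, symmetric_setfun (b p)) -> (forall p, submodular (b p)) ->
  step b c s = Some (i, A, s') -> step b c s' = Some (i', A', s'') -> A \subset A'.
Proof.
move=> sym sub /step_spec[_ eA A_min act_s' raised] /step_spec[act_i' -> _ _ _].
have {}act_i' : i' \in st_act s by move: act_i'; rewrite act_s' inE => /andP[].
have A_cheapest : A = smallest_items (st_chi s) #|A| by rewrite {2}eA card_demand.
rewrite A_cheapest in raised.
have dem'_i' : (#|A| <= demand_card b (st_chi s') i')%N.
  by apply: demand_card_raised raised; rewrite -?card_demand ?A_min.
rewrite A_cheapest; apply: subset_trans (smallest_items_raised raised) _.
exact: smallest_items_mono.
Qed.

Lemma step_some s k : #|st_act s| = k.+1 ->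
  exists i A s', step b c s = Some (i, A, s') /\ #|st_act s'| = k.
Proof.
move=> act_s; have [i [A [s' e]]] : exists i A s', step b c s = Some (i, A, s').
  by apply: step_some_nonempty; rewrite -card_gt0 act_s.
exists i, A, s'; split=> //; apply/eqP; rewrite -eqSS -act_s.
by case/step_spec: e => act_i _ _ -> _; rewrite [X in _ == X](cardsD1 i) act_i.
Qed.

Lemma size_run k s : #|st_act s| = k -> size (run b c k s) = k.
Proof.
elim: k s => [//|k IH] s /step_some[i [A [s' [e act_s']]]].
by rewrite /= e /= IH.
Qed.

Lemma run_bundles_nested k s :
  (forall p, symmetric_setfun (b p)) -> (forall p, submodular (b p)) ->
  #|st_act s| = k -> forall r, (r.+1 < k)%N ->
  nth set0 (map snd (run b c k s)) r \subset nth set0 (map snd (run b c k s)) r.+1.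
Proof.
move=> sym sub; elim: k s => [//|k IH] s /step_some[i [A [s' [e act_s']]]] r lt_rk.
rewrite /= e; case: r lt_rk => [|r] lt_rk; last exact: IH.
case: k act_s' {IH} lt_rk => [//|k] /step_some[i' [A' [s'' [e' _]]]] _.
by rewrite /= e' /=; exact: step_bundle_subset e e'.
Qed.

End Iteration.

Theorem mainTheorem5 (R : realFieldType) (n m : nat)
    (b : 'I_n -> {set 'I_m} -> R) (c : 'I_m -> {set 'I_n} -> R) :
  (forall i, nonneg_setfun (b i)) ->
  (forall i, nondecreasing_setfun (b i)) ->
  (forall i, symmetric_setfun (b i)) ->
  (forall i, submodular (b i)) ->
  (forall j, nonneg_setfun (c j)) ->
  let out := iacsm_outcome b c in
  size out = n /\
  (forall k : nat, (k.+1 < n)%N ->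
     nth set0 (map snd out) k \subset nth set0 (map snd out) k.+1).
Proof.
move=> _ _ sym sub _ out.
have act_init : #|st_act (init_state c)| = n by rewrite cardsT card_ord.
by split; [exact: size_run | exact: run_bundles_nested].
Qed.
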